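(* Let $(X,\mathcal U)$ be a non-archimedean uniform space. For every $n\in\mathbb N$, the set $B_n$ of all elements of $A(X)$ of length at most $n$ is closed in $A_{NA}(X,\mathcal U)$.
   Context: A uniform space is non-archimedean if its (Hausdorff) uniformity has a base of equivalence relations. $A_{NA}(X,\mathcal U)$ is the free abelian non-archimedean group of $(X,\mathcal U)$: the abelian Hausdorff group with a local base at $0$ of open subgroups, realized on the free abelian group $A(X)$, such that every uniformly continuous map from $X$ into an abelian non-archimedean group extends uniquely to a continuous homomorphism. The length of a nonzero $w=\sum_{i=1}^n k_ix_i\in A(X)$ (distinct $x_i\in X$, $k_i\in\mathbb Z\setminus\{0\}$) is $\sum_i|k_i|$; the length of $0$ is $0$. *)

From HB Require Import structures.
From mathcomp Require Import all_boot all_order all_algebra.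
From mathcomp Require Import all_classical all_reals all_analysis.
From mathcomp Require Import freeg.
Set Implicit Arguments. Unset Strict Implicit. Unset Printing Implicit Defensive.
Import Order.TTheory GRing.Theory Num.Theory.
Local Open Scope classical_set_scope.
Local Open Scope ring_scope.

Definition AX (X : uniformType) := {freeg X / int}.

Definition gen (X : uniformType) (x : X) : AX X := << x >>.

Definition fg_length (X : uniformType) (w : AX X) : nat :=
  (\sum_(x <- dom w) `|coeff x w|%N)%N.

Definition Bn (X : uniformType) (n : nat) : set (AX X) :=
  [set w | (fg_length w <= n)%N].

Definition equiv_rel_set (T : Type) (E : set (T * T)) : Prop :=
  [/\ forall x, E (x, x),
      forall x y, E (x, y) -> E (y, x) &
      forall x y z, E (x, y) -> E (y, z) -> E (x, z)].

Definition non_archimedean_uniform (X : uniformType) : Prop :=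
  hausdorff_space X /\
  forall U : set (X * X), entourage U -> exists2 E : set (X * X), entourage E & equiv_rel_set E /\ E `<=` U.

Definition is_subgroup (G : zmodType) (H : set G) : Prop :=
  [/\ H 0, forall a b, H a -> H b -> H (a + b) & forall a, H a -> H (- a)].

(* A subgroup H of A(X) is a basic open subgroup of A_NA(X,U) iff the
   embedding X -> A(X) is "uniformly continuous with respect to H", i.e.
   some entourage E satisfies x - y \in H for all (x,y) \in E.  These
   subgroups form a base at 0 of the topology of A_NA(X,U): it is the finest
   abelian group topology on A(X) with a base at 0 of open subgroups making
   X -> A(X) uniformly continuous, which is exactly the universal one. *)
Definition NA_basic_subgroup (X : uniformType) (H : set (AX X)) : Prop :=
  is_subgroup H /\
  exists2 E : set (X * X), entourage E & forall x y, E (x, y) -> H (gen x - gen y).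

Definition ANA_open (X : uniformType) (O : set (AX X)) : Prop :=
  forall w, O w -> exists2 H, NA_basic_subgroup H & forall h, H h -> O (w + h).

Definition ANA_closed (X : uniformType) (C : set (AX X)) : Prop :=
  ANA_open (~` C).

From HB Require Import structures.
From mathcomp Require Import all_boot all_order all_algebra.
From mathcomp Require Import all_classical all_reals all_analysis.
From mathcomp Require Import freeg.

Set Implicit Arguments.
Unset Strict Implicit.
Unset Printing Implicit Defensive.
Import Order.TTheory GRing.Theory Num.Theory.
Local Open Scope classical_set_scope.
Local Open Scope ring_scope.

(* Let w be outside B_n, with support s.  Since X is Hausdorff and
   non-archimedean, some entourage E that is an equivalence relation
   separates the points of s.  For a in s, the total coefficient of an element
   on the E-class of a is a homomorphism A(X) -> Z vanishing on every
   x - y with (x, y) in E, so the common kernel H of these homomorphisms is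
   an open subgroup of A_NA(X).  On w + h with h in H they return the
   coefficients of w, and as the classes of the points of s are disjoint,
   length (w + h) >= sum_a |coeff a w| = length w > n. *)

Section HausdorffEntourage.
Context {X : uniformType} (hX : hausdorff_space X).

Lemma hausdorff_entourage_neq (a b : X) : a != b -> entourage [set p | p != (a, b)].
Proof.
move=> ab; apply: contrapT => nE; move/eqP: ab; apply; apply: hX.
move=> A B; rewrite -filter_from_entourageE => -[U eU sUA] nB.
exists b; split; last exact: nbhs_singleton.
apply: sUA; rewrite /xsection /=; apply: contrapT => nUab; apply: nE.
by apply: filterS eU => p Up; apply/eqP => pab; apply: nUab; apply/mem_set; rewrite -pab.
Qed.

Lemma entourage_separating_pairs (l : seq (X * X)) :
  entourage [set p | p \in l -> p.1 = p.2].
Proof.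
elim: l => [|[a b] l IH]; first exact: filterS filterT.
have [/eqP eq_ab|neq_ab] := boolP (a == b).
  by apply: filterS IH => p lp /=; rewrite inE => /predU1P [->|/lp].
apply: filterS (filterI (hausdorff_entourage_neq neq_ab) IH) => p [/eqP npab lp] /=.
by rewrite inE => /predU1P [//|/lp].
Qed.

Lemma entourage_separating (s : seq X) :
  exists2 U : set (X * X), entourage U & {in s &, forall a b, U (a, b) -> a = b}.
Proof.
exists [set p | p \in [seq (a, b) | a <- s, b <- s] -> p.1 = p.2].
  exact: entourage_separating_pairs.
by move=> a b sa sb /=; apply; apply/allpairsP; exists (a, b).
Qed.

End HausdorffEntourage.

Lemma count_le1 (T : eqType) (P : pred T) (s : seq T) : uniq s ->
  {in s &, forall a b, P a -> P b -> a = b} -> (count P s <= 1)%N.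
Proof.
move=> us hP; rewrite -size_filter.
case E: (seq.filter P s) => [|x t] //.
have : x \in seq.filter P s by rewrite E mem_head.
rewrite mem_filter => /andP [Px xs].
rewrite -E; apply: (@uniq_leq_size _ _ [:: x]); first exact: filter_uniq.
move=> z; rewrite mem_filter => /andP [Pz zs]; rewrite inE; apply/eqP.
exact: hP.
Qed.

Section CoeffOn.
Context {K : choiceType}.
Implicit Types (P : pred K) (D : {freeg K / int}).

Definition coeff_on P D : int := fglift (fun y => (P y)%:R : int^o) D.

Lemma coeff_on_is_additive P : zmod_morphism (coeff_on P).
Proof. exact: (@lift_is_additive _ K int^o). Qed.

HB.instance Definition _ P :=
  GRing.isZmodMorphism.Build {freeg K / int} int (coeff_on P) (coeff_on_is_additive P).

Lemma coeff_onE P D : coeff_on P D = \sum_(y <- dom D) coeff y D * (P y)%:R.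
Proof. by rewrite /coeff_on -{1}(Freeg_dom D) fglift_Freeg /prelift big_map. Qed.

Lemma coeff_onU P x : coeff_on P << x >> = (P x)%:R.
Proof. by rewrite /coeff_on liftU scale1r. Qed.

Lemma coeff_on_pred1 P D a : {in dom D, P =1 pred1 a} -> coeff_on P D = coeff a D.
Proof.
move=> PD; rewrite -[coeff a D]/(coeff_on (pred1 a) D) !coeff_onE.
by apply: eq_big_seq => y /PD ->.
Qed.

Lemma sum_norm_coeff_on_le (I : Type) (s : seq I) (P : I -> pred K) D :
  (forall y, count (P^~ y) s <= 1)%N ->
  \sum_(i <- s) `|coeff_on (P i) D| <= \sum_(y <- dom D) `|coeff y D|.
Proof.
move=> disjP.
apply: (@le_trans _ _ (\sum_(i <- s) \sum_(y <- dom D) `|coeff y D| * (P i y)%:R)).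
  apply: ler_sum => i _; rewrite coeff_onE.
  apply: (le_trans (ler_norm_sum _ _ _)); apply: ler_sum => y _.
  by rewrite normrM normr_nat.
rewrite exchange_big /=; apply: ler_sum => y _.
rewrite -mulr_sumr; apply: ler_piMr => //.
have := disjP y; rewrite -sum1_count big_mkcond /= => count_y.
by rewrite -natr_sum lern1; exact: count_y.
Qed.

End CoeffOn.

Lemma kernels_subgroup (G M : zmodType) (I : Type) (A : set I)
    (f : I -> {additive G -> M}) :
  is_subgroup [set g | forall i, A i -> f i g = 0].
Proof.
split=> [i _|g g' fg fg' i Ai|g fg i Ai]; first exact: raddf0.
  by rewrite raddfD fg // fg' // addr0.
by rewrite raddfN fg // oppr0.
Qed.

Lemma fg_lengthE (X : uniformType) (w : AX X) :
  (fg_length w)%:Z = \sum_(x <- dom w) `|coeff x w|.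
Proof.
rewrite /fg_length (big_morph Posz PoszD (erefl (Posz 0%N))).
by apply: eq_bigr => x _; rewrite abszE.
Qed.

Theorem lemma4p19 (X : uniformType) (hX : non_archimedean_uniform X) (n : nat) :
  ANA_closed (@Bn X n).
Proof.
case: hX => hausX hE w /= Bn_w.
have [U eU sepU] := entourage_separating hausX (dom w).
have [E eE [[Erefl Esym Etrans] EU]] := hE U eU.
pose P (a : X) : pred X := fun y => `[< E (a, y) >].
have classP : forall a, a \in dom w -> {in dom w, P a =1 pred1 a}.
  move=> a wa y wy; apply/asboolP/eqP => [/EU/sepU-> //|->]; exact: Erefl.
exists [set h | forall a, a \in dom w -> coeff_on (P a) h = 0].
  split; first exact: (kernels_subgroup [set a | a \in dom w]
    (fun a => coeff_on (P a) : {additive _ -> _})).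
  exists E => // x y Exy a _; rewrite raddfB /gen /= !coeff_onU.
  suff -> : P a x = P a y by rewrite subrr.
  by apply/asboolP/asboolP => [Eax|Eay]; eauto.
move=> h Hh Bn_wh; apply: Bn_w; apply: leq_trans Bn_wh.
rewrite -lez_nat !fg_lengthE.
have <- : \sum_(a <- dom w) `|coeff_on (P a) (w + h)| = \sum_(a <- dom w) `|coeff a w|.
  apply: eq_big_seq => a wa.
  by rewrite raddfD /= Hh // addr0 (coeff_on_pred1 (classP a wa)).
apply: sum_norm_coeff_on_le => y; apply: count_le1 => [|a b wa wb /asboolP Eay /asboolP Eby].
  exact: uniq_dom.
by apply: sepU => //; apply/EU/(Etrans _ _ _ Eay)/Esym.
Qed.
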